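(* Let $(\mathcal{A},\varphi)$ be a tracial noncommutative probability space with universal enveloping traffic space $(\mathcal{B},\psi)=(\mathcal{G}(\mathcal{A}),\psi)$. Let $t\in\mathcal{G}(\mathcal{A})$ be (the class of) a graph monomial with vertices $v\neq w$ forming a 3-connection (i.e. $\lambda_t(v,w)\ge3$ in the underlying undirected multigraph). Then $t_{v\sim w}\equiv t\pmod\psi$, where $t_{v\sim w}$ is the graph monomial obtained from $t$ by identifying $v$ and $w$.
   Context: $(\mathcal{A},\varphi)$: unital complex algebra with unital tracial linear functional; free cumulants $\kappa_n$ determined by $\varphi(a_1\cdots a_n)=\sum_{\pi\in NC(n)}\prod_{B\in\pi}\kappa_{|B|}[(a_i)_{i\in B}]$. A graph monomial in $\mathcal{A}$ is a finite connected directed multigraph $(V,E,\mathrm{src},\mathrm{tgt})$ (loops, parallel edges allowed) with distinguished, not necessarily distinct, vertices $v_{\mathrm{in}},v_{\mathrm{out}}$ and edge labels in $\mathcal{A}$, up to isomorphism. $\iota(a)$: two vertices, one edge from $v_{\mathrm{in}}$ to $v_{\mathrm{out}}$ labelled $a$. Substitution $Z_g(t_1,\dots,t_K)$ for a connected bi-rooted multidigraph $g$ with ordered edges $e_1,\dots,e_K$ replaces each $e_i$ by a copy of $t_i$, identifying $\mathrm{src}(e_i)$ with the input and $\mathrm{tgt}(e_i)$ with the output of $t_i$; the product $t_1t_2$ identifies the input of $t_1$ with the output of $t_2$ (output of $t_1$ and input of $t_2$ become output and input). $\mathcal{G}(\mathcal{A})$ is the span of graph monomials modulo the span of $Z_g(\iota(a_1),\dots,\iota(a_K))-Z_g(P(\iota(b_1),\dots,\iota(b_n)),\iota(a_2),\dots)$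 (any edge position) for $a_1=P(b_1,\dots,b_n)$, $P$ a noncommutative polynomial. A test graph is a finite connected directed multigraph with labels in $\mathcal{A}$; $T^\pi$ identifies vertices in blocks of a partition $\pi$. Cactus: connected multigraph with each edge in exactly one simple cycle (loops, pairs of parallel edges count); pads = these cycles; oriented cactus: every pad directed. $\tau^0_\varphi[T]=\prod_{C\in\mathrm{Pads}(T)}\kappa_{n_C}[\gamma(e_1),\dots,\gamma(e_{n_C})]$ for oriented cacti (edges listed with $\mathrm{src}(e_i)=\mathrm{tgt}(e_{i+1})$, indices mod $n_C$), else $0$; $\tau_\varphi[T]=\sum_\pi\tau^0_\varphi[T^\pi]$ over partitions of the vertex set. $\psi(t)=\tau_\varphi[\tilde\Delta(t)]$ where $\tilde\Delta(t)$ identifies input and output and forgets roots (well defined on $\mathcal{G}(\mathcal{A})$). $s\equiv t\pmod\psi$ means $\psi((s-t)u)=0$ for all $u\in\mathcal{G}(\mathcal{A})$. $\lambda_t(v,w)$: minimal number of edges whose deletion disconnects $v$ and $w$. *)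

From HB Require Import structures.
From mathcomp Require Import all_boot all_algebra.
From mathcomp Require Import reals complex.
Set Implicit Arguments.
Unset Strict Implicit.
Unset Printing Implicit Defensive.
Import GRing.Theory Num.Theory.
Local Open Scope ring_scope.

Definition noncrossing (n : nat) (P : {set {set 'I_n}}) : bool :=
  [forall B1 in P, forall B2 in P, forall a : 'I_n, forall b : 'I_n,
   forall c : 'I_n, forall d : 'I_n,
     ((B1 != B2) && ((a < b)%N && (b < c)%N && (c < d)%N)
       && (a \in B1) && (c \in B1) && (b \in B2) && (d \in B2)) ==> false].

Definition is_NC (n : nat) (P : {set {set 'I_n}}) : bool :=
  partition P [set: 'I_n] && noncrossing P.

(* kappa is a family of free cumulants for phi: for every n and a_1..a_n,
   phi(a_1 ... a_n) = sum_{pi in NC(n)} prod_{B in pi} kappa_{|B|}[(a_i)_{i in B}]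
   (the a_i, i in B, listed in increasing order of i).  kappa_n is encoded as
   the restriction of kappa : seq A -> C to sequences of size n. *)
Definition free_cumulants (C : pzRingType) (A : pzRingType) (phi : A -> C)
    (kappa : seq A -> C) : Prop :=
  forall s : seq A,
    phi (\prod_(a <- s) a) =
    \sum_(P : {set {set 'I_(size s)}} | is_NC P)
       \prod_(B in P) kappa [seq nth 0 s (nat_of_ord i) | i <- enum B].

(* A graph has a vertex carrier type gV, a vertex set verts (the actual     *)
(* vertices), an edge type gE (all elements are edges), source, target and  *)
(* label maps.                                                              *)

Record graph (A : Type) := Graph {
  gV : finType;
  gE : finType;
  verts : {set gV};
  src : gE -> gV;
  tgt : gE -> gV;
  lab : gE -> A }.

Arguments verts {A} _.
Arguments src {A} _ _.
Arguments tgt {A} _ _.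
Arguments lab {A} _ _.

Section Graphs.
Variable A : Type.
Implicit Types g : graph A.

Definition graph_wf g : bool :=
  [forall e, (src g e \in verts g) && (tgt g e \in verts g)].

Definition uadj g (F : {set gE g}) : rel (gV g) :=
  fun x y => [exists e in F, ((src g e == x) && (tgt g e == y))
                          || ((src g e == y) && (tgt g e == x))].

Definition linked g (F : {set gE g}) (x y : gV g) : bool := connect (uadj F) x y.

Definition gconnected g : bool :=
  [forall x in verts g, forall y in verts g, linked [set: gE g] x y].

(* lambda_g(v,w): minimal number of edges whose deletion disconnects v, w
   (the default value #|E| is attained by deleting all edges when v != w). *)
Definition edge_conn g (v w : gV g) : nat :=
  \big[minn/#|gE g|]_(S : {set gE g} | ~~ linked (~: S) v w) #|S|.

Definition gmap g (f : gV g -> gV g) : graph A :=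
  @Graph A (gV g) (gE g) (f @: verts g) (fun e => f (src g e))
         (fun e => f (tgt g e)) (lab g).

(* C is the edge set of a simple (undirected) cycle: edges e_0..e_{k-1}
   distinct, vertices v_0..v_{k-1} distinct, e_i joins v_i and v_{i+1 mod k};
   k = 1 is a loop, k = 2 a pair of parallel edges. *)
Definition ucycle_set g (C : {set gE g}) : bool :=
  [exists k : 'I_(#|gE g|).+1, exists es : {ffun 'I_k -> gE g},
   exists vs : {ffun 'I_k -> gV g},
     [&& (0 < k)%N, injectiveb es, injectiveb vs, C == es @: [set: 'I_k] &
      [forall i : 'I_k,
        ((src g (es i) == vs i) && (tgt g (es i) == vs (ordS i)))
        || ((src g (es i) == vs (ordS i)) && (tgt g (es i) == vs i))]]].

Definition pads g : {set {set gE g}} := [set C | ucycle_set C].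

Definition cactus g : bool :=
  gconnected g && [forall e, #|[set C in pads g | e \in C]| == 1%N].

Definition dordering g (C : {set gE g}) (f : {ffun 'I_#|C| -> gE g}) : bool :=
  [&& injectiveb f, f @: [set: 'I_#|C|] == C &
      [forall i : 'I_#|C|, src g (f i) == tgt g (f (ordS i))]].

Definition directed_pad g (C : {set gE g}) : bool :=
  [exists f, @dordering g C f].

Definition oriented_cactus g : bool :=
  cactus g && [forall C in pads g, directed_pad C].

End Graphs.

Arguments dordering {A g} C f.
Arguments gmap {A} g f.
Arguments edge_conn {A} g v w.

Section Traffic.
Variables (C : pzRingType) (A : pzRingType) (kappa : seq A -> C).

Definition pad_cumulant (g : graph A) (P : {set gE g}) : C :=
  match [pick f | @dordering A g P f] with
  | Some f => kappa [seq lab g (f i) | i <- enum 'I_#|P|]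
  | None => 0
  end.

Definition tau0 (g : graph A) : C :=
  if oriented_cactus g then \prod_(P in pads g) pad_cumulant P else 0.

Definition brep (V : finType) (pi : {set {set V}}) (v : V) : V :=
  odflt v [pick x in pblock pi v].

Definition gquot (g : graph A) (pi : {set {set gV g}}) : graph A :=
  gmap g (brep pi).

Definition tau (g : graph A) : C :=
  \sum_(pi : {set {set gV g}} | partition pi (verts g)) tau0 (gquot pi).

End Traffic.

Record gmono (A : Type) := GMono {
  mgraph : graph A;
  vin : gV mgraph;
  vout : gV mgraph }.

Arguments vin {A} _.
Arguments vout {A} _.

Section Monomials.
Variable A : Type.

Definition gmono_wf (t : gmono A) : bool :=
  [&& graph_wf (mgraph t), gconnected (mgraph t),
      vin t \in verts (mgraph t) & vout t \in verts (mgraph t)].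

Definition identify (t : gmono A) (v w : gV (mgraph t)) : gmono A :=
  let f := fun x => if x == w then v else x in
  @GMono A (gmap (mgraph t) f) (f (vin t)) (f (vout t)).

Definition delta (t : gmono A) : graph A :=
  gmap (mgraph t) (fun x => if x == vout t then vin t else x).

Definition sum_map (T1 T2 U1 U2 : Type) (f1 : T1 -> U1) (f2 : T2 -> U2)
  (x : T1 + T2) : U1 + U2 :=
  match x with inl y => inl (f1 y) | inr y => inr (f2 y) end.

(* product t1 t2: disjoint union, input of t1 identified with output of t2;
   output of t1 is the output, input of t2 is the input *)
Definition gmul (t1 t2 : gmono A) : gmono A :=
  let g1 := mgraph t1 in let g2 := mgraph t2 in
  let f := fun x : (gV g1 + gV g2)%type =>
             if x == inr (vout t2) then inl (vin t1) else x in
  let g := @Graph A (gV g1 + gV g2)%type (gE g1 + gE g2)%type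
              (f @: ((@inl (gV g1) (gV g2)) @: verts g1
                     :|: (@inr (gV g1) (gV g2)) @: verts g2))
              (fun e => f (sum_map (src g1) (src g2) e))
              (fun e => f (sum_map (tgt g1) (tgt g2) e))
              (fun e => match e with inl e1 => lab g1 e1 | inr e2 => lab g2 e2 end) in
  @GMono A g (f (inr (vin t2))) (f (inl (vout t1))).

End Monomials.

Section LinComb.
Variables (C : pzRingType) (A : pzRingType).

(* elements of the span of graph monomials: formal finite linear combinations *)
Definition lincomb := seq (C * gmono A).

Definition lc_wf (u : lincomb) : bool := all (fun p => gmono_wf p.2) u.

Definition lc_mul (x y : lincomb) : lincomb :=
  [seq (p.1 * q.1, gmul p.2 q.2) | p <- x, q <- y].

Variable kappa : seq A -> C.

Definition psi (t : gmono A) : C := tau kappa (delta t).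

Definition psi_lc (x : lincomb) : C := \sum_(p <- x) p.1 * psi p.2.

Definition eq_mod_psi (s t : gmono A) : Prop :=
  forall u : lincomb, lc_wf u ->
    psi_lc (lc_mul [:: (1, s); (-1, t)] u) = 0.

End LinComb.

(* Both psi((t_{v~w}) u) and psi(t u) are tau of a graph obtained from the
   disjoint union of t and u by identifying vertices along a map g, so each
   expands as a sum of tau^0 of quotients over the partitions of the union
   whose blocks are unions of fibres of g.  For t_{v~w} these are exactly the
   partitions occurring for t that put v and w in one block.  The other terms
   vanish: two distinct vertices of a cactus are separated by deleting at most
   two edges (three edges of a minimum cut would put one edge on two pads),
   whereas the images of v and w survive the deletion of any two edges since
   lambda_t(v,w) >= 3, so those quotients are not cacti. *)

From HB Require Import structures.
From mathcomp Require Import all_boot all_order all_algebra.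
From mathcomp Require Import reals complex.
From mathcomp Require Import zify.
From Stdlib Require Import FunctionalExtensionality.
Import Order.TTheory GRing.Theory.
Set Implicit Arguments.
Unset Strict Implicit.
Unset Printing Implicit Defensive.

Lemma homo_connect (T U : finType) (r : rel T) (r' : rel U) (f : T -> U) :
  (forall x y, r x y -> connect r' (f x) (f y)) ->
  forall x y, connect r x y -> connect r' (f x) (f y).
Proof.
move=> H x y /connectP [p pth ->]; elim: p x pth => [|z p IH] x /=.
  by rewrite connect0.
by case/andP=> rxz pz; apply: connect_trans (H _ _ rxz) (IH _ pz).
Qed.

Section Connectivity.
Variables (A : Type) (G : graph A).
Implicit Types (F S : {set gE G}) (x y : gV G).

Lemma src_verts e : graph_wf G -> src G e \in verts G.
Proof. by move/forallP/(_ e)/andP=> []. Qed.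

Lemma tgt_verts e : graph_wf G -> tgt G e \in verts G.
Proof. by move/forallP/(_ e)/andP=> []. Qed.

Definition joins (e : gE G) x y :=
  ((src G e == x) && (tgt G e == y)) || ((src G e == y) && (tgt G e == x)).

Definition separates S x y := ~~ linked (~: S) x y.

Lemma joinsC e x y : joins e x y = joins e y x.
Proof. by rewrite /joins orbC. Qed.

Lemma joins_src_tgt e : joins e (src G e) (tgt G e).
Proof. by rewrite /joins !eqxx. Qed.

Lemma joins_eq e x y x' y' : joins e x y -> joins e x' y' ->
  (x = x' /\ y = y') \/ (x = y' /\ y = x').
Proof.
by rewrite /joins => /orP[]/andP[/eqP-> /eqP->] /orP[]/andP[/eqP-> /eqP->]; auto.
Qed.

Lemma uadjP F x y : reflect (exists2 e, e \in F & joins e x y) (uadj F x y).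
Proof.
by apply: (iffP existsP) => [[e /andP[eF j]]|[e eF j]]; exists e => //; apply/andP.
Qed.

Lemma uadj_sym F : symmetric (uadj F).
Proof. by move=> x y; apply/uadjP/uadjP => -[e eF j]; exists e; rewrite // joinsC. Qed.

Lemma linked_sym F x y : linked F x y = linked F y x.
Proof. exact: (sym_connect_sym (uadj_sym F)). Qed.

Lemma linked_trans F x y z : linked F x y -> linked F y z -> linked F x z.
Proof. exact: connect_trans. Qed.

Lemma linked_refl F x : linked F x x.
Proof. exact: connect0. Qed.

Lemma linked_edge F e x y : e \in F -> joins e x y -> linked F x y.
Proof. by move=> eF j; apply: connect1; apply/uadjP; exists e. Qed.

Lemma linked_subset F F' x y : F \subset F' -> linked F x y -> linked F' x y.
Proof.
move=> sFF'; apply: connect_sub => u z /uadjP[e eF j].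
by apply: linked_edge (subsetP sFF' e eF) j.
Qed.

Lemma linked0 x y : linked set0 x y -> x = y.
Proof.
case/connectP=> [[|z p]] /=; first by move=> _ ->.
by case/andP=> /uadjP[e]; rewrite inE.
Qed.

Lemma separatesT x y : x != y -> separates [set: gE G] x y.
Proof. by move=> xy; rewrite /separates setCT; apply: contra xy => /linked0->. Qed.

Lemma linked_setU1 F e x y :
  linked (e |: F) x y -> ~~ linked F x y ->
  (linked F x (src G e) && linked F (tgt G e) y) ||
  (linked F x (tgt G e) && linked F (src G e) y).
Proof.
case/connectP=> p pth ->.
(* Invariant along the path: either [F] alone still reaches the current vertex
   from [x], or the path has already crossed [e] in one direction. *)
set Q := fun z => [|| linked F x z,
    (linked F x (src G e) && linked F (tgt G e) z) |
    (linked F x (tgt G e) && linked F (src G e) z)].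
suff: Q (last x p) by case/or3P=> ->; rewrite ?orbT.
elim/last_ind: p pth => [|p z IH]; first by rewrite /Q /= linked_refl.
rewrite rcons_path last_rcons => /andP[/IH Qp /uadjP[e' e'F j]].
move: e'F; rewrite !inE => /orP[/eqP ee'|e'F]; last first.
  have lk : linked F (last x p) z by apply: linked_edge j.
  by case/or3P: Qp => [h|/andP[h1 h2]|/andP[h1 h2]];
    rewrite /Q ?(linked_trans h lk) ?(linked_trans h2 lk) ?h1 ?orbT.
rewrite {e'}ee' in j.
case/orP: j => /andP[/eqP su /eqP tz].
- rewrite -tz /Q; rewrite -su in Qp.
  case/or3P: Qp => [h|/andP[h1 h2]|/andP[h1 h2]].
  + by rewrite h linked_refl ?orbT.
  + by rewrite linked_sym in h2; rewrite (linked_trans h1 h2).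
  + by rewrite h1 linked_refl ?orbT.
- rewrite -su /Q; rewrite -tz in Qp.
  case/or3P: Qp => [h|/andP[h1 h2]|/andP[h1 h2]].
  + by rewrite h linked_refl ?orbT.
  + by rewrite h1.
  + by rewrite linked_sym in h2; rewrite (linked_trans h1 h2).
Qed.

Lemma ucycle_set_of_seq (vl : seq (gV G)) (el : seq (gE G)) v0 e0 :
  size vl = size el -> 0 < size el -> uniq vl -> uniq el ->
  (forall i, i < size el ->
     joins (nth e0 el i) (nth v0 vl i) (nth v0 vl (i.+1 %% size el))) ->
  ucycle_set [set x in el].
Proof.
move=> svl el0 uvl uel hj.
have hk : size el < #|gE G|.+1.
  by rewrite ltnS -(card_uniqP uel); apply: max_card.
apply/existsP; exists (Ordinal hk).
apply/existsP; exists [ffun i : 'I_(size el) => nth e0 el i].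
apply/existsP; exists [ffun i : 'I_(size el) => nth v0 vl i].
apply/and5P; split => //.
- apply/injectiveP => i j; rewrite !ffunE => /eqP.
  by rewrite nth_uniq // => /eqP/val_inj.
- apply/injectiveP => i j; rewrite !ffunE => /eqP.
  by rewrite nth_uniq ?svl // => /eqP/val_inj.
- apply/eqP/setP => x; rewrite inE; apply/idP/imsetP => [xel|[i _ ->]].
    have lt : index x el < size el by rewrite index_mem.
    by exists (Ordinal lt) => //; rewrite ffunE /= nth_index.
  by rewrite ffunE mem_nth.
- by apply/forallP => i; rewrite !ffunE; apply: hj.
Qed.

Lemma path_edges F a p (e0 : gE G) : path (uadj F) a p -> uniq (a :: p) ->
  exists L : seq (gE G), [/\ size L = size p, uniq L, {subset L <= F} &
    forall i, i < size p ->
      joins (nth e0 L i) (nth a (a :: p) i) (nth a (a :: p) i.+1)].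
Proof.
move=> pth up; set vl := a :: p.
pose ep x y := odflt e0 [pick e in F | joins e x y].
have epP x y : uadj F x y -> ep x y \in F /\ joins (ep x y) x y.
  case/uadjP=> e1 e1F j1; rewrite /ep; case: pickP => [e2 /andP[]|/(_ e1)] //=.
  by rewrite e1F j1.
have adj i : i < size p -> uadj F (nth a vl i) (nth a vl i.+1).
  by move=> lt; move/pathP: pth => /(_ a i lt).
exists [seq ep (nth a vl i) (nth a vl i.+1) | i <- iota 0 (size p)].
have nthL i : i < size p ->
    nth e0 [seq ep (nth a vl i) (nth a vl i.+1) | i <- iota 0 (size p)] i =
    ep (nth a vl i) (nth a vl i.+1).
  by move=> lt; rewrite (nth_map 0) ?size_iota // nth_iota.
split.
- by rewrite size_map size_iota.
- rewrite map_inj_in_uniq ?iota_uniq // => i j; rewrite !mem_iota !add0n => /= li lj.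
  have [_ ji] := epP _ _ (adj _ li); have [_ jj] := epP _ _ (adj _ lj) => eq.
  rewrite eq in ji; have svl : size vl = (size p).+1 by [].
  have lti : i < size vl by rewrite svl ltnW.
  have ltj : j < size vl by rewrite svl ltnW.
  have lti1 : i.+1 < size vl by rewrite svl.
  have ltj1 : j.+1 < size vl by rewrite svl.
  case: (joins_eq jj ji) => [[/eqP h _]|[/eqP h1 /eqP h2]].
    by move: h; rewrite nth_uniq // => /eqP.
  move: h1 h2; rewrite !nth_uniq // => /eqP h1 /eqP h2; lia.
- by move=> x /mapP[i0]; rewrite mem_iota add0n => /adj /epP[] + _ ->.
- by move=> i lt; rewrite nthL //; have [] := epP _ _ (adj _ lt).
Qed.

Lemma ucycle_set_of_linked F e a b :
  a != b -> e \notin F -> joins e b a -> linked F a b ->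
  exists C, [/\ ucycle_set C, e \in C, C :\ e \subset F & linked (C :\ e) a b].
Proof.
move=> ab eF jb /connectP[p pth bl]; subst b.
case: (shortenP pth) ab jb => p' pth' up' _ ab jb.
have [L [sL uL LF jL]] := path_edges e pth' up'.
have n0 : 0 < size p' by move: ab; case: (p') => //=; rewrite eqxx.
have CF : [set x in rcons L e] :\ e \subset F.
  apply/subsetP => x; rewrite !inE mem_rcons inE => /andP[xe /orP[/eqP xe'|/LF //]].
  by rewrite xe' eqxx in xe.
exists [set x in rcons L e]; split => //.
- apply: (@ucycle_set_of_seq (a :: p') _ a e); rewrite ?size_rcons ?sL //.
  + by rewrite rcons_uniq uL andbT; apply: contra eF => /LF.
  + move=> i; rewrite ltnS leq_eqVlt => /orP[/eqP->|lt].
      by rewrite modnn nth_rcons sL ltnn eqxx (nth_last a (a :: p')).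
    by rewrite modn_small ?ltnS // nth_rcons sL lt; apply: jL.
- by rewrite inE mem_rcons mem_head.
- apply/connectP; exists p' => //; apply/(pathP a) => i lt.
  apply/uadjP; exists (nth e L i); last exact: jL.
  rewrite !inE mem_rcons inE mem_nth ?sL // orbT andbT.
  by apply: contraNneq eF => <-; apply: LF; rewrite mem_nth ?sL.
Qed.

Lemma pads_through_gt1 e C1 C2 : ucycle_set C1 -> ucycle_set C2 -> C1 != C2 ->
  e \in C1 -> e \in C2 -> 1 < #|[set C in pads G | e \in C]|.
Proof.
move=> u1 u2 n12 e1 e2.
have <- : #|[set C1; C2]| = 2 by rewrite cards2 n12.
apply: subset_leq_card; apply/subsetP => C; rewrite !inE.
by case/orP => /eqP->; rewrite ?u1 ?u2 ?e1 ?e2.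
Qed.

Lemma edge_conn_le_cut x y S : separates S x y -> edge_conn G x y <= #|S|.
Proof.
by rewrite /edge_conn -minEnat => cutS; exact: (@bigmin_le_cond _ nat _ _ S _ _ cutS).
Qed.

Section MinimumCut.
Variables (x y : gV G) (S0 : {set gE G}).
Hypothesis cutS0 : separates S0 x y.
Hypothesis minS0 : forall S, separates S x y -> #|S0| <= #|S|.

Lemma min_cut_edge_crosses e : e \in S0 ->
  exists a b, [/\ joins e b a, linked (~: S0) x a & linked (~: S0) b y].
Proof.
move=> eS.
have lk : linked (e |: ~: S0) x y.
  have -> : e |: ~: S0 = ~: (S0 :\ e) by rewrite setCD setUC.
  apply/negPn/negP => /minS0.
  by rewrite (cardsD1 e S0) eS add1n ltnn.
case/orP: (linked_setU1 lk cutS0) => /andP[h1 h2].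
  by exists (src G e), (tgt G e); rewrite joinsC joins_src_tgt.
by exists (tgt G e), (src G e); rewrite joins_src_tgt.
Qed.

(* Going from one end of [e1] to [x], across [e2], and from [y] back to the
   other end of [e1] closes a cycle through [e1] and [e2]. *)
Lemma min_cut_pad e1 e2 : e1 \in S0 -> e2 \in S0 -> e2 != e1 ->
  exists C, [/\ ucycle_set C, e1 \in C, e2 \in C & C :\ e1 \subset e2 |: ~: S0].
Proof.
move=> e1S e2S e21.
have [a1 [b1 [j1 xa1 b1y]]] := min_cut_edge_crosses e1S.
have [a2 [b2 [j2 xa2 b2y]]] := min_cut_edge_crosses e2S.
have ab1 : a1 != b1.
  by apply: contraNneq cutS0 => eab; rewrite (linked_trans xa1) // eab.
have sub : ~: S0 \subset e2 |: ~: S0 by apply/subsetP => z zS; rewrite in_setU zS orbT.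
have lk : linked (e2 |: ~: S0) a1 b1.
  apply: (linked_trans (y := x)); first by apply: linked_subset sub _; rewrite linked_sym.
  apply: (linked_trans (linked_subset sub xa2)).
  rewrite joinsC in j2; apply: (linked_trans (linked_edge (setU11 _ _) j2)).
  by apply: linked_subset sub _; rewrite (linked_trans b2y) // linked_sym.
have e1F : e1 \notin e2 |: ~: S0 by rewrite !inE negb_or e1S eq_sym e21.
have [C [uC e1C CF lkC]] := ucycle_set_of_linked ab1 e1F j1 lk.
exists C; split => //; apply/negPn/negP => e2C.
have CS0 : C :\ e1 \subset ~: S0.
  apply/subsetP => z zC; have := subsetP CF z zC; rewrite !inE => /orP[/eqP ze2|//].
  by move: zC; rewrite ze2 !inE (negbTE e2C) andbF.
have lk_xy := linked_trans xa1 (linked_trans (linked_subset CS0 lkC) b1y).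
by move: cutS0; rewrite /separates lk_xy.
Qed.

Lemma cactus_min_cut_le2 : cactus G -> #|S0| <= 2.
Proof.
case/andP=> _ /forallP one_pad; rewrite leqNgt; apply/negP => c3.
have [e1 e1S] : exists e1, e1 \in S0.
  by apply/set0Pn; rewrite -card_gt0 (ltn_trans _ c3).
have [e2 e2S] : exists e2, e2 \in S0 :\ e1.
  by apply/set0Pn; rewrite -card_gt0; have := cardsD1 e1 S0; rewrite e1S /=; lia.
have [e3 e3S] : exists e3, e3 \in S0 :\ e1 :\ e2.
  apply/set0Pn; rewrite -card_gt0; have := cardsD1 e2 (S0 :\ e1); rewrite e2S /=.
  by have := cardsD1 e1 S0; rewrite e1S /=; lia.
move: e2S e3S; rewrite !inE => /andP[e21 e2S] /and3P[e32 e31 e3S].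
have [C2 [u2 e1C2 e2C2 C2S]] := min_cut_pad e1S e2S e21.
have [C3 [u3 e1C3 e3C3 _]] := min_cut_pad e1S e3S e31.
have n23 : C2 != C3.
  apply: contraNneq e32 => eC.
  have : e3 \in C2 :\ e1 by rewrite !inE e31 eC e3C3.
  by move/(subsetP C2S); rewrite !inE e3S orbF.
by have := pads_through_gt1 u2 u3 n23 e1C2 e1C3; rewrite (eqP (one_pad e1)).
Qed.
End MinimumCut.

Lemma cactus_cut2 x y : cactus G -> x != y ->
  exists2 S : {set gE G}, #|S| <= 2 & separates S x y.
Proof.
move=> cact xy.
have [S0 cutS0 minS0] :=
  @arg_minnP _ _ (fun S => separates S x y) (fun S => #|S|) (separatesT xy).
by exists S0 => //; apply: cactus_min_cut_le2 minS0 cact.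
Qed.

End Connectivity.

Section VertexMap.
Variables (A : Type) (G : graph A) (h : gV G -> gV G).

Lemma gmap_wf : graph_wf G -> graph_wf (gmap G h).
Proof. by move=> wf; apply/forallP => e; rewrite /= !imset_f ?src_verts ?tgt_verts. Qed.

Lemma joins_gmap e x y : @joins A G e x y -> @joins A (gmap G h) e (h x) (h y).
Proof. by rewrite /joins /= => /orP[]/andP[/eqP-> /eqP->]; rewrite !eqxx ?orbT. Qed.

Lemma linked_gmap (F : {set gE G}) x y :
  linked F x y -> @linked A (gmap G h) F (h x) (h y).
Proof.
apply: homo_connect => u z /uadjP[e eF j]; apply: connect1; apply/uadjP.
by exists e => //; apply: joins_gmap.
Qed.

Lemma gconnected_gmap : gconnected G -> gconnected (gmap G h).
Proof.
move=> /forallP c; apply/forallP => x'; apply/implyP => /imsetP[x xv ->].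
apply/forallP => y'; apply/implyP => /imsetP[y yv ->].
by apply: linked_gmap; move/implyP/(_ xv)/forallP/(_ y)/implyP/(_ yv): (c x).
Qed.

Hypothesis wf : graph_wf G.
Hypothesis h_inj : {in verts G &, injective h}.

Lemma ucycle_set_gmap (C : {set gE G}) : ucycle_set C -> @ucycle_set A (gmap G h) C.
Proof.
case/existsP=> k /existsP[es /existsP[vs /and5P[k0 ies ivs Ces /forallP J]]].
have vsV i : vs i \in verts G.
  case/orP: (J i) => /andP[/eqP e1 /eqP e2].
  - by rewrite -e1 src_verts.
  - by rewrite -e2 tgt_verts.
apply/existsP; exists k; apply/existsP; exists es.
apply/existsP; exists [ffun i => h (vs i)].
apply/and5P; split => //.
- apply/injectiveP => i j; rewrite !ffunE => /h_inj.
  by move=> /(_ (vsV i) (vsV j)); apply: (injectiveP _ ivs).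
- apply/forallP => i; rewrite !ffunE /=.
  by case/orP: (J i) => /andP[/eqP-> /eqP->]; rewrite !eqxx ?orbT.
Qed.

Lemma dordering_gmap (C : {set gE G}) f :
  @dordering A (gmap G h) C f = dordering C f.
Proof.
rewrite /dordering /=; congr [&& _, _ & _]; apply: eq_forallb => i.
by apply/eqP/eqP => [/h_inj|->]; rewrite ?src_verts ?tgt_verts //; apply.
Qed.

End VertexMap.

(* [vinv] maps [gmap G h] back to [G], turning the one-way transport lemmas
   above into equalities. *)
Section InjectiveVertexMap.
Variables (A : Type) (V E : finType) (vs : {set V}) (s t : E -> V) (l : E -> A).
Variable h : V -> V.
Local Notation G := (@Graph A V E vs s t l).
Hypothesis wf : graph_wf G.
Hypothesis h_inj : {in vs &, injective h}.

Definition vinv y := odflt y [pick x in vs | h x == y].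

Lemma vinvK x : x \in vs -> vinv (h x) = x.
Proof.
move=> xv; rewrite /vinv; case: pickP => [x' /andP[x'v /eqP e]|/(_ x)] /=.
  exact: h_inj.
by rewrite xv eqxx.
Qed.

Lemma vinv_inj : {in h @: vs &, injective vinv}.
Proof. by move=> _ _ /imsetP[x xv ->] /imsetP[y yv ->]; rewrite !vinvK // => ->. Qed.

Lemma vinv_verts : vinv @: (h @: vs) = vs.
Proof.
rewrite -imset_comp; apply/setP => x; apply/imsetP/idP => [[y yv ->]|xv].
  by rewrite /= vinvK.
by exists x; rewrite /= ?vinvK.
Qed.

Lemma vinv_src : (fun e => vinv (h (s e))) = s.
Proof. by apply: functional_extensionality => e; rewrite vinvK // (src_verts _ wf). Qed.

Lemma vinv_tgt : (fun e => vinv (h (t e))) = t.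
Proof. by apply: functional_extensionality => e; rewrite vinvK // (tgt_verts _ wf). Qed.

Lemma ucycle_set_gmap_inj (C : {set E}) :
  @ucycle_set A (gmap G h) C = @ucycle_set A G C.
Proof.
apply/idP/idP; last exact: ucycle_set_gmap.
move/(ucycle_set_gmap (G := gmap G h) (h := vinv) (gmap_wf (G := G) h wf) vinv_inj).
by rewrite /gmap /= vinv_verts vinv_src vinv_tgt.
Qed.

Lemma gconnected_gmap_inj : gconnected (gmap G h) = gconnected G.
Proof.
apply/idP/idP; last exact: gconnected_gmap.
move/(gconnected_gmap (G := gmap G h) vinv).
by rewrite /gmap /= vinv_verts vinv_src vinv_tgt.
Qed.

Lemma pads_gmap_inj : pads (gmap G h) = pads G.
Proof. by apply/setP => C; rewrite !inE ucycle_set_gmap_inj. Qed.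

Lemma oriented_cactus_gmap_inj : oriented_cactus (gmap G h) = oriented_cactus G.
Proof.
rewrite /oriented_cactus /cactus gconnected_gmap_inj pads_gmap_inj.
congr (_ && _); apply: eq_forallb => C; congr (_ ==> _).
by apply: eq_existsb => f; rewrite dordering_gmap.
Qed.

End InjectiveVertexMap.

Lemma tau0_gmap_inj (C : pzRingType) (A : pzRingType) (kappa : seq A -> C)
    (G : graph A) (h : gV G -> gV G) :
  graph_wf G -> {in verts G &, injective h} ->
  tau0 kappa (gmap G h) = tau0 kappa G.
Proof.
case: G h => V E vs s t l h /= wf h_inj.
rewrite /tau0 oriented_cactus_gmap_inj // pads_gmap_inj //.
case: ifP => // _; apply: eq_bigr => P _; rewrite /pad_cumulant.
by rewrite (eq_pick (fun f => @dordering_gmap _ _ h wf h_inj P f)).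
Qed.

Section BlockRepresentative.
Variable V : finType.
Implicit Types (P : {set {set V}}) (B : {set V}).

Lemma trivIset_of_meet P :
  (forall B1 B2 x, B1 \in P -> B2 \in P -> x \in B1 -> x \in B2 -> B1 = B2) ->
  trivIset P.
Proof.
move=> H; apply/trivIsetP => B1 B2 PB1 PB2 nB12; apply/pred0P => x /=.
by apply/negbTE/negP => /andP[xB1 xB2]; move/eqP: nB12; apply; apply: H xB1 xB2.
Qed.

Lemma trivIset_meet P B1 B2 x : trivIset P -> B1 \in P -> B2 \in P ->
  x \in B1 -> x \in B2 -> B1 = B2.
Proof.
by move=> tP PB1 PB2 xB1 xB2; rewrite -(def_pblock tP PB1 xB1) (def_pblock tP PB2 xB2).
Qed.

Lemma mem_cover P B x : B \in P -> x \in B -> x \in cover P.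
Proof. by move=> PB xB; apply/bigcupP; exists B. Qed.

Lemma brep_mem P x : x \in cover P -> brep P x \in pblock P x.
Proof.
by move=> xc; rewrite /brep; case: pickP => [y yb|/(_ x)] //=; rewrite mem_pblock xc.
Qed.

Lemma brep_eq P x y : x \in cover P -> pblock P x = pblock P y -> brep P x = brep P y.
Proof.
by move=> xc e; rewrite /brep -e; case: pickP => [//|/(_ x)] /=; rewrite mem_pblock xc.
Qed.

Lemma pblock_brep P x : trivIset P -> x \in cover P -> pblock P (brep P x) = pblock P x.
Proof. by move=> tP xc; apply: same_pblock => //; apply: brep_mem. Qed.

End BlockRepresentative.

(* Partitions of [D] whose blocks are unions of fibres of [g] ([saturated])
   correspond bijectively to partitions of [g @: D]. *)
Section PartitionImage.
Variables (V : finType) (D : {set V}) (g : V -> V).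
Implicit Types (P Q : {set {set V}}) (B : {set V}).

Definition saturated P :=
  [forall x in D, forall y in D, (g x == g y) ==> (pblock P x == pblock P y)].

Definition part_image P : {set {set V}} := [set g @: B | B : {set V} in P].

Definition part_preimage Q : {set {set V}} :=
  [set g @^-1: B :&: D | B : {set V} in Q].

Lemma saturated_pblock P : (forall z, pblock P (g z) = pblock P z) -> saturated P.
Proof.
move=> H; apply/forallP => x; apply/implyP => _; apply/forallP => y; apply/implyP => _.
by apply/implyP => /eqP e; rewrite -(H x) e H.
Qed.

Lemma saturated_eq P x y :
  saturated P -> x \in D -> y \in D -> g x = g y -> pblock P x = pblock P y.
Proof.
move/forallP/(_ x) => + xD yD e; rewrite xD /= => /forallP/(_ y).
by rewrite yD /= e eqxx => /eqP.
Qed.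

Lemma partition_preimage Q : partition Q (g @: D) ->
  [/\ partition (part_preimage Q) D, saturated (part_preimage Q)
    & part_image (part_preimage Q) = Q].
Proof.
move=> pQ; have tQ := partition_trivIset pQ.
have imgpre B : B \in Q -> g @: (g @^-1: B :&: D) = B.
  move=> QB; apply/setP => y; apply/imsetP/idP => [[x] |yB].
    by rewrite !inE => /andP[xB _] ->.
  have /imsetP[x xD yx] := subsetP (partitionS pQ QB) y yB.
  by exists x => //; rewrite !inE -yx yB.
have tpre : trivIset (part_preimage Q).
  apply: trivIset_of_meet => _ _ x /imsetP[B1 QB1 ->] /imsetP[B2 QB2 ->].
  rewrite !inE => /andP[x1 _] /andP[x2 _].
  by rewrite (trivIset_meet tQ QB1 QB2 x1 x2).
have block_of x : x \in D -> exists2 B, B \in Q & g x \in B.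
  by move=> xD; apply/bigcupP; rewrite -/(cover Q) (cover_partition pQ) imset_f.
have cpre : cover (part_preimage Q) = D.
  apply/setP => x; apply/bigcupP/idP => [[_ /imsetP[B QB ->]]|xD].
    by rewrite !inE => /andP[].
  have [B QB gxB] := block_of x xD.
  by exists (g @^-1: B :&: D); [apply: imset_f | rewrite !inE gxB xD].
split.
- rewrite /partition cpre eqxx tpre /=; apply/imsetP => -[B QB /setP e].
  have /set0Pn[y yB] := partition_neq0 pQ QB.
  have /imsetP[x xD yx] := subsetP (partitionS pQ QB) y yB.
  by have := e x; rewrite !inE -yx yB xD.
- apply/forallP => x; apply/implyP => xD; apply/forallP => y; apply/implyP => yD.
  apply/implyP => /eqP gxy; have [B QB gxB] := block_of x xD.
  have PB : g @^-1: B :&: D \in part_preimage Q by apply: imset_f.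
  rewrite (def_pblock tpre PB (x := x)) ?(def_pblock tpre PB (x := y)) //.
    by rewrite !inE -gxy gxB.
  by rewrite !inE gxB.
- rewrite /part_image /part_preimage -imset_comp -[RHS]imset_id.
  exact: eq_in_imset.
Qed.

Section Saturated.
Variable P : {set {set V}}.
Hypotheses (pP : partition P D) (sP : saturated P).

Lemma preimage_image_block B : B \in P -> g @^-1: (g @: B) :&: D = B.
Proof.
move=> PB; have sB := partitionS pP PB.
apply/setP => x; rewrite !inE; apply/andP/idP => [[/imsetP[b bB gxb] xD]|xB].
  have bD : b \in D by apply: (subsetP sB).
  rewrite -(def_pblock (partition_trivIset pP) PB bB) -(saturated_eq sP xD bD gxb).
  by rewrite mem_pblock (cover_partition pP).
by rewrite imset_f // (subsetP sB).
Qed.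

Lemma partition_image :
  partition (part_image P) (g @: D) /\ part_preimage (part_image P) = P.
Proof.
have tP := partition_trivIset pP.
split; last first.
  rewrite /part_image /part_preimage -imset_comp -[RHS]imset_id.
  exact: eq_in_imset preimage_image_block.
apply/and3P; split.
- apply/eqP/setP => y; apply/bigcupP/imsetP.
    case=> _ /imsetP[B PB ->] /imsetP[x xB ->].
    by exists x => //; rewrite -(cover_partition pP) (mem_cover PB xB).
  case=> x; rewrite -(cover_partition pP) => /bigcupP[B PB xB] ->.
  by exists (g @: B); apply: imset_f.
- apply: trivIset_of_meet => _ _ y /imsetP[B1 PB1 ->] /imsetP[B2 PB2 ->].
  move=> /imsetP[x1 x1B ->] /imsetP[x2 x2B e].
  have x1D := subsetP (partitionS pP PB1) _ x1B.
  have x2D := subsetP (partitionS pP PB2) _ x2B.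
  rewrite -(def_pblock tP PB1 x1B) -(def_pblock tP PB2 x2B).
  by rewrite (saturated_eq sP x1D x2D e).
- apply/imsetP => -[B PB] /esym/eqP; rewrite imset_eq0 => /eqP B0.
  by move: (partition0 pP); rewrite -B0 PB.
Qed.

End Saturated.
End PartitionImage.

Local Open Scope ring_scope.

Section TauVertexMap.
Variables (C A : pzRingType) (kappa : seq A -> C).
Variables (V E : finType) (D : {set V}) (s t : E -> V) (l : E -> A) (g : V -> V).
Local Notation G := (@Graph A V E D s t l).
Hypothesis wf : graph_wf G.

Section QuotientOfImage.
Variable P : {set {set V}}.
Hypotheses (pP : partition P D) (sP : saturated D g P).
Local Notation P' := (part_image g P).

Let pP' : partition P' (g @: D). Proof. by case: (partition_image pP sP). Qed.

Lemma pblock_part_image y : y \in D -> pblock P' (g y) = g @: pblock P y.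
Proof.
move=> yD; have yP : y \in cover P by rewrite (cover_partition pP).
by apply: def_pblock; rewrite ?(partition_trivIset pP') ?imset_f ?pblock_mem ?mem_pblock.
Qed.

Lemma brep_in x : x \in D -> brep P x \in D.
Proof.
rewrite -(cover_partition pP) => xP; apply: subsetP (brep_mem xP).
by rewrite (cover_partition pP) (partitionS pP) ?pblock_mem.
Qed.

Lemma brep_image_brep x : x \in D -> brep P' (g x) = brep P' (g (brep P x)).
Proof.
move=> xD; apply: brep_eq; first by rewrite (cover_partition pP') imset_f.
rewrite !pblock_part_image ?brep_in // pblock_brep ?(partition_trivIset pP) //.
by rewrite (cover_partition pP).
Qed.

Lemma gquot_gmap :
  @gquot A (gmap G g) P' = gmap (@gquot A G P) (fun y => brep P' (g y)).
Proof.
rewrite /gquot /gmap /=; f_equal.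
- by rewrite -!imset_comp; apply: eq_in_imset => x xD /=; apply: brep_image_brep.
- by apply: functional_extensionality => e; rewrite brep_image_brep // (src_verts _ wf).
- by apply: functional_extensionality => e; rewrite brep_image_brep // (tgt_verts _ wf).
Qed.

Lemma brep_image_inj :
  {in verts (@gquot A G P) &, injective (fun y => brep P' (g y))}.
Proof.
have tP' := partition_trivIset pP'.
move=> _ _ /imsetP[x1 x1D ->] /imsetP[x2 x2D ->]; rewrite -!brep_image_brep // => e.
have gx_cover x : x \in D -> g x \in cover P'.
  by move=> xD; rewrite (cover_partition pP') imset_f.
have m1 := brep_mem (gx_cover _ x1D); have m2 := brep_mem (gx_cover _ x2D).
rewrite e in m1.
have := trivIset_meet tP' (pblock_mem (gx_cover _ x1D)) (pblock_mem (gx_cover _ x2D)).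
move=> /(_ _ m1 m2); rewrite !pblock_part_image // => bl.
have xP x : x \in D -> pblock P x \in P.
  by rewrite -(cover_partition pP); apply: pblock_mem.
apply: brep_eq; first by rewrite (cover_partition pP).
rewrite -(preimage_image_block pP sP (xP _ x1D)) bl.
exact: preimage_image_block (xP _ x2D).
Qed.

Lemma tau0_gquot_gmap :
  tau0 kappa (@gquot A (gmap G g) P') = tau0 kappa (@gquot A G P).
Proof. by rewrite gquot_gmap tau0_gmap_inj ?gmap_wf //; apply: brep_image_inj. Qed.

End QuotientOfImage.

Lemma tau_gmap :
  tau kappa (gmap G g) =
  \sum_(P : {set {set V}} | partition P D && saturated D g P) tau0 kappa (@gquot A G P).
Proof.
rewrite /tau /= (reindex_onto (part_image g) (part_preimage D g)) /=; last first.
  by move=> Q pQ; case: (partition_preimage pQ).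
have filt P :
    partition (part_image g P) (g @: D) && (part_preimage D g (part_image g P) == P)
    = partition P D && saturated D g P.
  apply/andP/andP => [[pP /eqP e]|[pP sP]].
    by case: (partition_preimage pP); rewrite e.
  by case: (partition_image pP sP) => -> ->.
apply: eq_big => [//|P]; rewrite filt => /andP[pP sP].
exact: tau0_gquot_gmap.
Qed.

End TauVertexMap.

Section ProductDelta.
Variables (C A : pzRingType) (kappa : seq A -> C) (t q : gmono A).
Local Notation Gt := (mgraph t).
Local Notation Gq := (mgraph q).
Local Notation V := (gV Gt + gV Gq)%type.
Local Notation E := (gE Gt + gE Gq)%type.

Definition union_verts : {set V} := inl @: verts Gt :|: inr @: verts Gq.

Definition union_graph : graph A :=
  @Graph A V E union_verts (sum_map (src Gt) (src Gq)) (sum_map (tgt Gt) (tgt Gq))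
    (fun e => match e with inl e1 => lab Gt e1 | inr e2 => lab Gq e2 end).

Definition glue (x : V) : V := if x == inr (vout q) then inl (vin t) else x.
Definition close (y : V) : V :=
  if y == glue (inl (vout t)) then glue (inr (vin q)) else y.
Definition delta_mul_map (x : V) : V := close (glue x).

Lemma delta_gmul : delta (gmul t q) = gmap union_graph delta_mul_map.
Proof. by rewrite /delta /gmul /gmap /=; f_equal; rewrite -imset_comp. Qed.

Variables (v w : gV Gt).
Definition merge_vw (x : gV Gt) := if x == w then v else x.
Definition glue_vw (x : V) : V :=
  if x == inr (vout q) then inl (merge_vw (vin t)) else x.
Definition close_vw (y : V) : V :=
  if y == glue_vw (inl (merge_vw (vout t))) then glue_vw (inr (vin q)) else y.
Definition delta_mul_map_vw (x : V) : V := close_vw (glue_vw (sum_map merge_vw id x)).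

Lemma delta_gmul_identify :
  delta (gmul (identify v w) q) = gmap union_graph delta_mul_map_vw.
Proof.
rewrite /delta /gmul /gmap; f_equal.
- have merge_union : sum_map merge_vw id @: union_verts =
      inl @: (merge_vw @: verts Gt) :|: inr @: verts Gq.
    by rewrite /union_verts imsetU -!imset_comp; congr (_ :|: _); apply: eq_imset.
  have -> : [set delta_mul_map_vw x | x in union_verts] =
      [set close_vw (glue_vw x) | x in sum_map merge_vw id @: union_verts].
    by rewrite -imset_comp.
  rewrite merge_union -imset_comp /= -[LHS]imset_comp; apply: eq_imset => x.
  by rewrite /= /close_vw /glue_vw /merge_vw.
- by apply: functional_extensionality => -[e|e].
- by apply: functional_extensionality => -[e|e].
Qed.

Hypotheses (t_wf : gmono_wf t) (q_wf : gmono_wf q).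
Hypotheses (hv : v \in verts Gt) (hw : w \in verts Gt) (hvw : v != w).
Hypothesis h3 : (3 <= edge_conn Gt v w)%N.

Lemma inl_union_verts x : x \in verts Gt -> (inl x : V) \in union_verts.
Proof. by move=> xv; rewrite in_setU imset_f. Qed.

Lemma inr_union_verts x : x \in verts Gq -> (inr x : V) \in union_verts.
Proof. by move=> xv; rewrite in_setU orbC imset_f. Qed.

Lemma union_graph_wf : graph_wf union_graph.
Proof.
case/and4P: t_wf => wft _ _ _; case/and4P: q_wf => wfq _ _ _.
apply/forallP => -[e|e] /=.
  by rewrite !inl_union_verts ?(src_verts _ wft) ?(tgt_verts _ wft).
by rewrite !inr_union_verts ?(src_verts _ wfq) ?(tgt_verts _ wfq).
Qed.

Local Notation out_q := (inr (vout q) : V).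
Local Notation in_t := (inl (vin t) : V).
Local Notation out_t := (inl (vout t) : V).
Local Notation in_q := (inr (vin q) : V).

Lemma roots_union_verts :
  [/\ out_q \in union_verts, in_t \in union_verts,
      out_t \in union_verts & in_q \in union_verts].
Proof.
case/and4P: t_wf => _ _ it ot; case/and4P: q_wf => _ _ iq oq.
by rewrite !inl_union_verts ?inr_union_verts.
Qed.

Lemma saturated_delta_mul_map P : saturated union_verts delta_mul_map P =
  (pblock P out_q == pblock P in_t) && (pblock P out_t == pblock P in_q).
Proof.
have [oqU itU otU iqU] := roots_union_verts.
apply/idP/andP => [sP|[/eqP qt /eqP tq]].
  have glue_q : delta_mul_map out_q = delta_mul_map in_t.
    by rewrite /delta_mul_map /glue eqxx.
  have close_t : delta_mul_map out_t = delta_mul_map in_q.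
    by rewrite /delta_mul_map /close (_ : glue out_t = out_t) // eqxx; case: ifP.
  by rewrite (saturated_eq sP oqU itU glue_q) (saturated_eq sP otU iqU close_t).
apply: saturated_pblock => z.
have hglue y : pblock P (glue y) = pblock P y by rewrite /glue; case: eqP => [->|].
rewrite /delta_mul_map /close; case: eqP => [e|_]; last exact: hglue.
by rewrite hglue -tq -(hglue z) e hglue.
Qed.

Lemma saturated_delta_mul_map_vw P : saturated union_verts delta_mul_map_vw P =
  [&& pblock P out_q == pblock P in_t, pblock P out_t == pblock P in_q &
      pblock P (inl v) == pblock P (inl w)].
Proof.
have [oqU itU otU iqU] := roots_union_verts.
have merge_v : merge_vw v = v by rewrite /merge_vw (negbTE hvw).
apply/idP/and3P => [sP|[/eqP qt /eqP tq /eqP vw]].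
  have glue_q : delta_mul_map_vw out_q = delta_mul_map_vw in_t.
    by rewrite /delta_mul_map_vw /glue_vw /= eqxx.
  have close_t : delta_mul_map_vw out_t = delta_mul_map_vw in_q.
    rewrite /delta_mul_map_vw /close_vw /=.
    by rewrite (_ : glue_vw _ = inl (merge_vw (vout t))) // eqxx; case: ifP.
  have merge_w : delta_mul_map_vw (inl v) = delta_mul_map_vw (inl w).
    by rewrite /delta_mul_map_vw /= merge_v /merge_vw eqxx.
  rewrite (saturated_eq sP oqU itU glue_q) (saturated_eq sP otU iqU close_t).
  by rewrite (saturated_eq sP _ _ merge_w) ?inl_union_verts.
apply: saturated_pblock.
have hmerge z : pblock P (sum_map merge_vw id z) = pblock P z.
  by case: z => [x|x] //=; rewrite /merge_vw; case: eqP => [->|].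
have hglue z : pblock P (glue_vw z) = pblock P z.
  by rewrite /glue_vw; case: eqP => [->|] //; rewrite qt -(hmerge in_t).
move=> z; rewrite /delta_mul_map_vw /close_vw.
case: eqP => [e|_]; last by rewrite hglue hmerge.
rewrite hglue -tq -(hmerge z) -(hglue (sum_map _ _ z)) e hglue.
exact: (esym (hmerge out_t)).
Qed.

Lemma separates_gquot (P : {set {set V}}) (S : {set E}) x y :
  @separates A (@gquot A union_graph P) S (brep P (inl x)) (brep P (inl y)) ->
  separates (inl @^-1: S) x y.
Proof.
rewrite /separates /linked; apply: contra => lk.
apply: (homo_connect (f := fun x => brep P (inl x))) lk => x' y' /uadjP[e eS j].
apply: connect1; apply/uadjP; exists (inl e); first by move: eS; rewrite !inE.
by move: j; rewrite /joins /= => /orP[]/andP[/eqP-> /eqP->]; rewrite !eqxx ?orbT.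
Qed.

Lemma tau0_gquot_split (P : {set {set V}}) : partition P union_verts ->
  pblock P (inl v) != pblock P (inl w) -> tau0 kappa (@gquot A union_graph P) = 0.
Proof.
move=> pP nvw; rewrite /tau0; case: ifP => // /andP[cact _].
have vP : (inl v : V) \in cover P by rewrite (cover_partition pP) inl_union_verts.
have wP : (inl w : V) \in cover P by rewrite (cover_partition pP) inl_union_verts.
have XY : brep P (inl v) != brep P (inl w).
  apply: contra nvw => /eqP e.
  have tP := partition_trivIset pP.
  by rewrite -(pblock_brep tP vP) e pblock_brep.
have [S cS sepS] := cactus_cut2 cact XY.
have inl_inj : injective (@inl (gE Gt) (gE Gq)) by move=> ? ? [].
have cSt : (#|inl @^-1: S| <= 2)%N.
  rewrite -(card_imset _ inl_inj) (leq_trans _ cS) //; apply: subset_leq_card.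
  by apply/subsetP => _ /imsetP[e eSt ->]; rewrite inE in eSt.
by have := leq_trans h3 (leq_trans (edge_conn_le_cut (separates_gquot sepS)) cSt).
Qed.

Lemma psi_gmul_identify : psi kappa (gmul (identify v w) q) = psi kappa (gmul t q).
Proof.
rewrite /psi delta_gmul_identify delta_gmul !(tau_gmap kappa _ union_graph_wf).
rewrite [RHS](bigID (fun P => pblock P (inl v) == pblock P (inl w))) /=.
rewrite [X in _ = _ + X]big1 ?addr0; last first.
  by move=> P /andP[/andP[pP _] nvw]; apply: tau0_gquot_split.
apply: eq_bigl => P.
by rewrite saturated_delta_mul_map saturated_delta_mul_map_vw !andbA.
Qed.

End ProductDelta.

Lemma eq_mod_psi_gmul (C A : pzRingType) (kappa : seq A -> C) (s t : gmono A) :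
  (forall q, gmono_wf q -> psi kappa (gmul s q) = psi kappa (gmul t q)) ->
  eq_mod_psi kappa s t.
Proof.
move=> eq_st u wfu; rewrite /psi_lc /lc_mul /= cats0 big_cat !big_map /=.
rewrite -big_split /=; elim: u wfu => [|[c q] u IH] /=; first by rewrite big_nil.
case/andP=> q_wf /IH; rewrite big_cons => ->.
by rewrite eq_st // mul1r mulN1r mulNr addrN addr0.
Qed.

Theorem corollary2p7 (R : realType) (A : algType R[i]) (phi : A -> R[i])
  (phi_lin : forall (c : R[i]) (a b : A), phi (c *: a + b) = c * phi a + phi b)
  (phi_unit : phi 1 = 1)
  (phi_trace : forall a b : A, phi (a * b) = phi (b * a))
  (kappa : seq A -> R[i]) (kappa_cum : free_cumulants phi kappa)
  (t : gmono A) (t_wf : gmono_wf t)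
  (v w : gV (mgraph t)) (hv : v \in verts (mgraph t)) (hw : w \in verts (mgraph t))
  (hvw : v != w) (h3 : (3 <= edge_conn (mgraph t) v w)%N) :
  eq_mod_psi kappa (@identify A t v w) t.
Proof.
apply: eq_mod_psi_gmul => q q_wf.
exact: psi_gmul_identify.
Qed.
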